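(* For every integer $m\ge2$ and all nonnegative integers $k_1,\dots,k_{m-1}$, $d^{(m)}_{k_1,\dots,k_{m-1}}$ is a positive integer divisible by $m$.
   Context: For $1\le j\le m$ and integers $k_1,\dots,k_{m-1}\ge0$, $e^{(m),j}_{k_1,\dots,k_{m-1}}=\prod_{1\le i\le m,\,i\ne j}(i-j)^{k_{(i-j)\bmod m}}$, where $(i-j)\bmod m$ denotes the representative in $\{1,\dots,m-1\}$. Then $d^{(m)}_{k_1,\dots,k_{m-1}}=2\sum_{j=1}^{p}e^{(m),j}_{k_1,\dots,k_{m-1}}$ if $m=2p$, and $d^{(m)}_{k_1,\dots,k_{m-1}}=e^{(m),p+1}_{k_1,\dots,k_{m-1}}+2\sum_{j=1}^{p}e^{(m),j}_{k_1,\dots,k_{m-1}}$ if $m=2p+1$. *)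

From HB Require Import structures.
From mathcomp Require Import all_boot all_order all_algebra.
Set Implicit Arguments. Unset Strict Implicit. Unset Printing Implicit Defensive.
Import Order.TTheory GRing.Theory Num.Theory.
Local Open Scope ring_scope.

(* The exponents k_1,...,k_{m-1} are given as a function k : nat -> nat;
   only the values k 1, ..., k (m-1) are used. *)

Definition resmod (m i j : nat) : nat := ((i + m - j) %% m)%N.

Definition e_coef (m : nat) (k : nat -> nat) (j : nat) : int :=
  \prod_(1 <= i < m.+1 | i != j) ((i%:Z - j%:Z) ^+ (k (resmod m i j))).

Definition d_coef (m : nat) (k : nat -> nat) : int :=
  let p := m./2 in
  if odd m then e_coef m k p.+1 + 2 * \sum_(1 <= j < p.+1) e_coef m k j
  else 2 * \sum_(1 <= j < p.+1) e_coef m k j.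

From HB Require Import structures.
From mathcomp Require Import all_boot all_order all_algebra.
From mathcomp Require Import ring lra zify.
Import Order.TTheory GRing.Theory Num.Theory.
Local Open Scope ring_scope.

(* Splitting the product e^j = prod_{i<>j} (i-j)^{k_{(i-j) mod m}}
   at i = j gives e^j = L_j * R_j, where L_j = prod_{t<j} (-t)^{k_{m-t}} collects
   the indices i = j - t < j and R_j = prod_{s<=m-j} s^{k_s} > 0 the indices
   i = j + s > j.  The same split of e^1 = R_1 reads e^1 = T_j * R_j with
   T_j = prod_{t<j} (m-t)^{k_{m-t}}.

   Weights.  Writing J = ceil(m/2), d^(m) = sum_{j<=J} w_j e^j where w_j = 2,
   except w_J = 1 when m is odd; in all cases sum_j w_j = m and w_1 = 2.

   Divisibility.  Since -t = m - t (mod m), L_j = T_j (mod m), hence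
   e^j = e^1 (mod m) and d^(m) = (sum_j w_j) e^1 = m e^1 = 0 (mod m).

   Let t0 be the least t >= 1 with k_{m-t} > 0 (or t0 = J).
   For j <= t0 the factor L_j = T_j = 1, so e^j = e^1 =: E > 0.  For
   t0 < j <= J every factor t^{k_{m-t}} of |L_j| is at most (m-t)^{k_{m-t}}, and
   the factor at t0 gains t0/(m-t0), so (m - t0) e^j >= -t0 E.  An elementary
   weighted-sum estimate then gives (m - t0) d^(m) >= m (W_1 - t0) E > 0,
   where W_1 = sum_{j<=t0} w_j > t0 because w_1 = 2. *)

Lemma ler_gain_expn (R : numDomainType) (a b : R) n :
  0 <= a -> a <= b -> (0 < n)%N -> b * a ^+ n <= a * b ^+ n.
Proof.
move=> a_ge0 ab; case: n => // n _.
have b_ge0 : 0 <= b := le_trans a_ge0 ab.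
rewrite !exprS !mulrA [b * a]mulrC.
by rewrite ler_wpM2l ?mulr_ge0 // lerXn2r.
Qed.

Lemma ler_prod_gain (R : numDomainType) (I : eqType) (r : seq I) (F G : I -> R)
    (i0 : I) (a b : R) :
  i0 \in r -> uniq r -> (forall i, i \in r -> 0 <= F i <= G i) ->
  0 <= b -> b * F i0 <= a * G i0 ->
  b * \prod_(i <- r) F i <= a * \prod_(i <- r) G i.
Proof.
move=> r_i0 r_uniq FG b_ge0 gain.
rewrite !(bigD1_seq i0) //= !mulrA big_seq_cond [X in _ <= _ * X]big_seq_cond.
have /andP[F0 _] := FG i0 r_i0.
apply: ler_pM; rewrite ?mulr_ge0 //.
  by apply: prodr_ge0 => i /andP[/FG /andP[]].
by apply: ler_prod => i /andP[/FG].
Qed.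

Lemma dvdz_subX (c a b : int) n : (c %| a - b)%Z -> (c %| a ^+ n - b ^+ n)%Z.
Proof. by move=> hab; rewrite subrXX dvdz_mulr. Qed.

Lemma dvdz_sub_prod (I : Type) (r : seq I) (P : pred I) (F G : I -> int) c :
  (forall i, P i -> (c %| F i - G i)%Z) ->
  (c %| \prod_(i <- r | P i) F i - \prod_(i <- r | P i) G i)%Z.
Proof.
move=> hFG; apply: (@big_ind2 _ _ (fun x y => (c %| x - y)%Z)) => //.
move=> x1 x2 y1 y2 h1 h2.
rewrite (_ : x1 * y1 - x2 * y2 = x1 * (y1 - y2) + (x1 - x2) * y2); last by ring.
by apply: rpredD; [apply: dvdz_mull | apply: dvdz_mulr].
Qed.

Lemma dvdz_weighted_sum (c E : int) (w f : nat -> int) a b :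
  (forall j, (a <= j < b)%N -> (c %| f j - E)%Z) ->
  (c %| \sum_(a <= j < b) w j)%Z -> (c %| \sum_(a <= j < b) w j * f j)%Z.
Proof.
move=> fE cw.
have -> : \sum_(a <= j < b) w j * f j =
          \sum_(a <= j < b) w j * (f j - E) + (\sum_(a <= j < b) w j) * E.
  by rewrite mulr_suml -big_split; apply: eq_bigr => j _; rewrite /= mulrBr subrK.
rewrite rpredD ?dvdz_mulr // big_nat rpred_sum // => j /fE.
exact: dvdz_mull.
Qed.

(* The positivity estimate: the first t0 terms equal E > 0 and carry weight
   W_1 > t0, and each later term satisfies (W - t0) f_j >= -t0 E, where W is
   the total weight; then the weighted sum is positive, since
   (W - t0) * sum >= W (W_1 - t0) E. *)
Lemma weighted_sum_gt0 (R : realDomainType) (w f : nat -> R) (E : R) t0 J :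
  (t0 <= J)%N -> (forall j, (t0 < j <= J)%N -> 0 <= w j) ->
  t0%:R < \sum_(1 <= j < t0.+1) w j -> 0 < E ->
  (forall j, (1 <= j <= t0)%N -> f j = E) ->
  (forall j, (t0 < j <= J)%N ->
     - (t0%:R * E) <= (\sum_(1 <= i < J.+1) w i - t0%:R) * f j) ->
  0 < \sum_(1 <= j < J.+1) w j * f j.
Proof.
move=> t0J w_ge0 W1_gt E_gt0 f_low f_high.
rewrite (@big_cat_nat _ _ _ t0.+1) // in f_high.
rewrite (@big_cat_nat _ _ _ t0.+1) //.
set W1 := \sum_(1 <= j < t0.+1) w j in W1_gt f_high *.
set W2 := \sum_(t0.+1 <= j < J.+1) w j in f_high *.
set c := W1 + W2 - t0%:R in f_high *.
have -> : \sum_(1 <= j < t0.+1) w j * f j = W1 * E.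
  by rewrite mulr_suml; apply: eq_big_nat => j /f_low ->.
have W2_ge0 : 0 <= W2 by rewrite /W2 big_nat; apply: sumr_ge0 => j /w_ge0.
have high : W2 * - (t0%:R * E) <= c * \sum_(t0.+1 <= j < J.+1) w j * f j.
  rewrite /W2 mulr_suml mulr_sumr !big_nat; apply: ler_sum => j hj.
  by rewrite mulrCA ler_wpM2l ?w_ge0 ?f_high.
have t0_ge0 : 0 <= t0%:R :> R by [].
have c_gt0 : 0 < c by rewrite /c; lra.
have key : 0 < (W1 + W2) * (W1 - t0%:R) * E by rewrite !mulr_gt0 //; lra.
rewrite /=; set S2 := \big[_/_]_(t0.+1 <= i < J.+1) _ in high *.
have expand : c * (W1 * E + S2) =
    (W1 + W2) * (W1 - t0%:R) * E + (c * S2 - W2 * - (t0%:R * E)).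
  by rewrite /c; ring.
by rewrite -(pmulr_rgt0 _ c_gt0) expand ltr_wpDr // subr_ge0.
Qed.

Lemma first_index_or_bound (P : pred nat) J : (1 <= J)%N ->
  exists t0, [/\ (1 <= t0 <= J)%N, forall t, (1 <= t < t0)%N -> ~~ P t
                 & (t0 < J)%N -> P t0].
Proof.
move=> J_gt0.
have exQ : exists t, ((0 < t) && P t || (J <= t))%N by exists J; rewrite leqnn orbT.
case: (ex_minnP exQ) => t0 Qt0 t0_min; exists t0; split.
- have : (t0 <= J)%N by apply: t0_min; rewrite leqnn orbT.
  by case/orP: Qt0 => [/andP[]|]; lia.
- move=> t ht; apply/negP => Pt.
  have : (t0 <= t)%N by apply: t0_min; rewrite Pt andbT; lia.
  lia.
- by move=> t0J; case/orP: Qt0 => [/andP[]//|]; lia.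
Qed.

Lemma resmod_below m i j : (1 <= i < j)%N -> (j <= m)%N ->
  resmod m i j = (m - (j - i))%N.
Proof. by move=> hi hj; rewrite /resmod modn_small; lia. Qed.

Lemma resmod_above m i j : (0 < j < i)%N -> (i <= m)%N -> resmod m i j = (i - j)%N.
Proof.
move=> hij him; rewrite /resmod (_ : i + m - j = (i - j) + m)%N; last by lia.
by rewrite modnDr modn_small; lia.
Qed.

Definition left_factor (m : nat) (k : nat -> nat) (j : nat) : int :=
  \prod_(1 <= t < j) (- t%:Z) ^+ k (m - t)%N.

Definition right_factor (m : nat) (k : nat -> nat) (j : nat) : int :=
  \prod_(1 <= s < (m - j).+1) s%:Z ^+ k s.

Definition top_factor (m : nat) (k : nat -> nat) (j : nat) : int :=
  \prod_(1 <= t < j) (m - t)%N%:Z ^+ k (m - t)%N.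

(* e^j = L_j * R_j: split the product at i = j and reindex i = j - t, i = j + s. *)
Lemma e_coef_factor m k j : (1 <= j <= m)%N ->
  e_coef m k j = left_factor m k j * right_factor m k j.
Proof.
move=> hj; have [j_gt0 j_le] : (0 < j)%N /\ (j <= m.+1)%N by lia.
rewrite /e_coef (@big_cat_nat _ _ _ j) // /left_factor /right_factor.
congr (_ * _).
  rewrite big_nat_rev big_nat_cond [RHS]big_nat_cond.
  apply: eq_big => t; first by rewrite andbT; apply/idP/idP; lia.
  move=> /andP[ht _]; rewrite resmod_below; [ | lia | lia].
  by congr (_ ^+ k _); lia.
rewrite big_ltn_cond ?eqxx //; last by lia.
rewrite -{1}[j.+1]add1n big_addn subSn; last by lia.
rewrite big_nat_cond [RHS]big_nat_cond.
apply: eq_big => s; first by rewrite andbT; apply/idP/idP; lia.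
move=> /andP[hs _]; rewrite resmod_above; [ | lia | lia].
by congr (_ ^+ k _); lia.
Qed.

(* e^1 = T_j * R_j: split R_1 at s = m - j and reindex s = m - t. *)
Lemma e_coef1_factor m k j : (1 <= j <= m)%N ->
  e_coef m k 1 = top_factor m k j * right_factor m k j.
Proof.
move=> hj; rewrite e_coef_factor; last by lia.
rewrite /left_factor big_geq // mul1r /right_factor /top_factor.
rewrite (@big_cat_nat _ _ _ (m - j).+1) /=; [ | lia | lia].
rewrite mulrC -[(m - j).+1]add1n big_addn.
have -> : ((m - 1).+1 - (m - j) = j)%N by lia.
congr (_ * _); rewrite big_nat_rev; apply: eq_big_nat => t ht.
by congr (_ ^+ k _); lia.
Qed.

Lemma right_factor_gt0 m k j : 0 < right_factor m k j.
Proof.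
rewrite /right_factor big_nat; apply: prodr_gt0 => s /andP[s_gt0 _].
by rewrite exprn_gt0 // ltz_nat.
Qed.

Lemma e_coef1_gt0 m k : (1 <= m)%N -> 0 < e_coef m k 1.
Proof.
move=> hm; rewrite (e_coef_factor m k 1) ?hm // /left_factor big_geq // mul1r.
exact: right_factor_gt0.
Qed.

(* L_j = T_j (mod m), factor by factor, because -t = m - t (mod m). *)
Lemma left_top_congr m k j : (j <= m.+1)%N ->
  (m%:Z %| left_factor m k j - top_factor m k j)%Z.
Proof.
move=> hj; rewrite /left_factor /top_factor !big_nat.
apply: dvdz_sub_prod => t ht; apply: dvdz_subX.
rewrite (_ : - t%:Z - (m - t)%N%:Z = - m%:Z); last by lia.
by rewrite rpredN dvdzz.
Qed.

Lemma e_coef_congr m k j : (1 <= j <= m)%N ->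
  (m%:Z %| e_coef m k j - e_coef m k 1)%Z.
Proof.
move=> hj; rewrite e_coef_factor // (e_coef1_factor _ _ _ hj) -mulrBl.
by apply: dvdz_mulr; apply: left_top_congr; lia.
Qed.

Lemma e_coef_inactive m k j : (1 <= j <= m)%N ->
  (forall t, (1 <= t < j)%N -> k (m - t)%N = 0%N) ->
  e_coef m k j = e_coef m k 1.
Proof.
move=> hjm k0.
have trivial (f : nat -> int) : \prod_(1 <= t < j) f t ^+ k (m - t)%N = 1.
  by rewrite big_nat big1 // => t /k0 ->; rewrite expr0.
by rewrite (e_coef_factor _ _ _ hjm) (e_coef1_factor _ _ _ hjm) /left_factor
  /top_factor !trivial.
Qed.

(* For j <= (m+1)/2 every t < j has t <= m - t, and the active exponent at t0
   yields the gain t0/(m - t0). *)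
Lemma left_factor_bound m k j t0 : (1 <= t0 < j)%N -> (j.*2 <= m.+1)%N ->
  (0 < k (m - t0))%N ->
  (m - t0)%N%:Z * `|left_factor m k j| <= t0%:Z * top_factor m k j.
Proof.
move=> ht0 hj k_pos.
have -> : `|left_factor m k j| = \prod_(1 <= t < j) t%:Z ^+ k (m - t)%N.
  by rewrite normr_prod; apply: eq_bigr => t _; rewrite normrX normrN.
apply: (@ler_prod_gain _ _ _ _ _ t0).
- by rewrite mem_index_iota.
- exact: iota_uniq.
- move=> t; rewrite mem_index_iota => ht.
  by rewrite exprn_ge0 // lerXn2r // ?nnegrE //; lia.
- by [].
- by apply: ler_gain_expn => //; lia.
Qed.

Lemma e_coef_lower m k j t0 : (1 <= t0 < j)%N -> (j.*2 <= m.+1)%N ->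
  (0 < k (m - t0))%N ->
  - (t0%:Z * e_coef m k 1) <= (m%:Z - t0%:Z) * e_coef m k j.
Proof.
move=> ht0 hj k_pos; have hjm : (1 <= j <= m)%N by lia.
have bound := left_factor_bound _ _ _ _ ht0 hj k_pos.
rewrite (e_coef_factor _ _ _ hjm) (e_coef1_factor _ _ _ hjm).
have B_gt0 := right_factor_gt0 m k j.
set L := left_factor m k j in bound *; set T := top_factor m k j in bound *.
set B := right_factor m k j in B_gt0 *.
have -> : m%:Z - t0%:Z = (m - t0)%N%:Z by lia.
set c := (m - t0)%N%:Z in bound *.
have c_ge0 : 0 <= c by [].
have B_ge0 : 0 <= B := ltW B_gt0.
have L_ge : c * (- `|L|) * B <= c * L * B.
  by rewrite ler_wpM2r // ler_wpM2l // lerNl ler_normr lexx orbT.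
have T_ge : c * `|L| * B <= t0%:Z * T * B by rewrite ler_wpM2r.
lra.
Qed.

Definition weight (m j : nat) : int := if odd m && (j == uphalf m) then 1 else 2.

Lemma weighted_sum_split m (f : nat -> int) :
  \sum_(1 <= j < (uphalf m).+1) weight m j * f j =
  (if odd m then f (uphalf m) else 0) + 2 * \sum_(1 <= j < (m./2).+1) f j.
Proof.
rewrite /weight uphalf_half mulr_sumr; case: (odd m) => /=.
  rewrite add1n big_nat_recr //= eqxx mul1r addrC; congr (_ + _).
  by apply: eq_big_nat => j hj; rewrite ifF //; apply/negP => /eqP; lia.
by rewrite add0r.
Qed.

Lemma d_coef_weighted m k :
  d_coef m k = \sum_(1 <= j < (uphalf m).+1) weight m j * e_coef m k j.
Proof.
by rewrite weighted_sum_split /d_coef uphalf_half; case: (odd m); rewrite ?add0r.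
Qed.

Lemma sum_weight m : \sum_(1 <= j < (uphalf m).+1) weight m j = m%:Z.
Proof.
rewrite -(eq_bigr _ (fun j _ => mulr1 (weight m j))) weighted_sum_split.
rewrite sumr_const_nat subSS subn0.
have := odd_double_half m; case: (odd m) => /= hm; lia.
Qed.

Lemma weight_ge1 m j : 1 <= weight m j.
Proof. by rewrite /weight; case: ifP. Qed.

Lemma weight1 m : (2 <= m)%N -> weight m 1 = 2.
Proof.
move=> hm; rewrite /weight uphalf_half; case: ifP => //= /andP[odd_m /eqP h].
by have := odd_double_half m; rewrite odd_m; lia.
Qed.

(* Since w_1 = 2 and w_j >= 1, the first t0 weights add up to more than t0. *)
Lemma weight_prefix_gt m t0 : (2 <= m)%N -> (1 <= t0)%N ->
  t0%:Z < \sum_(1 <= j < t0.+1) weight m j.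
Proof.
move=> hm ht0; rewrite big_ltn // weight1 //.
have : \sum_(2 <= j < t0.+1) (1 : int) <= \sum_(2 <= j < t0.+1) weight m j.
  by rewrite !big_nat; apply: ler_sum => j _; apply: weight_ge1.
set S := \sum_(2 <= j < t0.+1) weight m j.
rewrite sumr_const_nat pmulrn mulrzz mul1r; lia.
Qed.

Theorem mainTheorem15 (m : nat) (k : nat -> nat) :
  (2 <= m)%N -> 0 < d_coef m k /\ (m%:Z %| d_coef m k)%Z.
Proof.
move=> hm; rewrite d_coef_weighted; set J := uphalf m.
have J_ge1 : (1 <= J)%N by rewrite /J uphalf_half; lia.
have J_le : (J.*2 <= m.+1)%N by rewrite /J uphalfK; case: (odd m).
split.
- have [t0 [ht0 inactive active]] :=
    first_index_or_bound (fun t => 0 < k (m - t))%N _ J_ge1.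
  apply: (@weighted_sum_gt0 _ _ _ (e_coef m k 1) t0); first by lia.
  + by move=> j _; apply: le_trans (weight_ge1 m j).
  + by rewrite natz; apply: weight_prefix_gt; lia.
  + by apply: e_coef1_gt0; lia.
  + move=> j hj; apply: e_coef_inactive; first by lia.
    by move=> t ht; apply/eqP; rewrite -leqn0 leqNgt inactive //; lia.
  + move=> j hj; rewrite sum_weight natz; apply: e_coef_lower; [lia | lia |].
    by apply: active; lia.
- apply: (@dvdz_weighted_sum _ (e_coef m k 1)); last by rewrite sum_weight dvdzz.
  by move=> j hj; apply: e_coef_congr; lia.
Qed.
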